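(* Let $X$ be a real Hilbert space, let $f:X\to\mathbb{R}\cup\{+\infty\}$ be a proper $\Phi_{lsc}$-convex function and $\bar x\in\mathrm{dom}(f)$. If there exist $\rho\ge 0$ and $\delta>0$ such that $f(x)\ge f(\bar x)-\rho\|x-\bar x\|^2$ for all $x$ with $\|x-\bar x\|<\delta$, then there exists $\bar\rho\ge 0$ such that $f(x)\ge f(\bar x)-\bar\rho\|x-\bar x\|^2$ for all $x\in X$.
   Context: $\Phi_{lsc}$ is the class of functions $\varphi:X\to\mathbb{R}$, $\varphi(x)=-a\|x\|^2+\langle v,x\rangle+c$ with $a\ge0$, $v\in X^*$, $c\in\mathbb{R}$. $\mathrm{supp}(f):=\{\varphi\in\Phi_{lsc}:\varphi\le f \text{ on } X\}$. $f$ is $\Phi_{lsc}$-convex if $f=\sup\{\varphi:\varphi\in\mathrm{supp}(f)\}$ pointwise. $f$ is proper if $\mathrm{supp}(f)\ne\emptyset$ and $\mathrm{dom}(f):=\{x:f(x)<+\infty\}\neq\emptyset$. *)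

From Stdlib Require Import Reals Lra.
Open Scope R_scope.

Record HilbertSpace := {
  hcarrier :> Type;
  hzero : hcarrier;
  hadd : hcarrier -> hcarrier -> hcarrier;
  hopp : hcarrier -> hcarrier;
  hscal : R -> hcarrier -> hcarrier;
  hinner : hcarrier -> hcarrier -> R;
  hadd_assoc : forall x y z, hadd x (hadd y z) = hadd (hadd x y) z;
  hadd_comm : forall x y, hadd x y = hadd y x;
  hadd_zero : forall x, hadd x hzero = x;
  hadd_opp : forall x, hadd x (hopp x) = hzero;
  hscal_one : forall x, hscal 1 x = x;
  hscal_assoc : forall a b x, hscal a (hscal b x) = hscal (a * b) x;
  hscal_distr_l : forall a x y, hscal a (hadd x y) = hadd (hscal a x) (hscal a y);
  hscal_distr_r : forall a b x, hscal (a + b) x = hadd (hscal a x) (hscal b x);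
  hinner_sym : forall x y, hinner x y = hinner y x;
  hinner_add : forall x y z, hinner (hadd x y) z = hinner x z + hinner y z;
  hinner_scal : forall a x y, hinner (hscal a x) y = a * hinner x y;
  hinner_pos : forall x, 0 <= hinner x x;
  hinner_def : forall x, hinner x x = 0 -> x = hzero;
  hcomplete : forall u : nat -> hcarrier,
    (forall eps, 0 < eps -> exists N, forall m n, (N <= m)%nat -> (N <= n)%nat ->
        sqrt (hinner (hadd (u m) (hopp (u n))) (hadd (u m) (hopp (u n)))) < eps) ->
    exists l, forall eps, 0 < eps -> exists N, forall n, (N <= n)%nat ->
        sqrt (hinner (hadd (u n) (hopp l)) (hadd (u n) (hopp l))) < eps
}.

Arguments hzero {h}.
Arguments hadd {h}.
Arguments hopp {h}.
Arguments hscal {h}.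
Arguments hinner {h}.

Definition hsub {X : HilbertSpace} (x y : X) : X := hadd x (hopp y).
Definition hnorm {X : HilbertSpace} (x : X) : R := sqrt (hinner x x).

(** Topological dual X^*: continuous (= bounded) linear functionals. *)
Definition is_dual {X : HilbertSpace} (v : X -> R) : Prop :=
  (forall x y, v (hadd x y) = v x + v y) /\
  (forall a x, v (hscal a x) = a * v x) /\
  (exists C, forall x, Rabs (v x) <= C * hnorm x).

Inductive ERbar := Fin (r : R) | PInf.

Definition ER_le (a b : ERbar) : Prop :=
  match a, b with
  | _, PInf => True
  | PInf, Fin _ => False
  | Fin r, Fin s => r <= s
  end.

Definition in_Phi_lsc {X : HilbertSpace} (phi : X -> R) : Prop :=
  exists (a : R) (v : X -> R) (c : R),
    0 <= a /\ is_dual v /\ forall x, phi x = - a * (hnorm x)^2 + v x + c.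

Definition in_supp {X : HilbertSpace} (f : X -> ERbar) (phi : X -> R) : Prop :=
  in_Phi_lsc phi /\ forall x, ER_le (Fin (phi x)) (f x).

Definition phi_lsc_convex {X : HilbertSpace} (f : X -> ERbar) : Prop :=
  forall x,
    (forall phi, in_supp f phi -> ER_le (Fin (phi x)) (f x)) /\
    (forall b : ERbar, (forall phi, in_supp f phi -> ER_le (Fin (phi x)) b) ->
        ER_le (f x) b).

Definition dom {X : HilbertSpace} (f : X -> ERbar) (x : X) : Prop := f x <> PInf.

Definition proper {X : HilbertSpace} (f : X -> ERbar) : Prop :=
  (exists phi, in_supp f phi) /\ (exists x, dom f x).

(** A proper function has a support function [phi = -a|x|^2 + <v,x> + c],
    and [phi] is bounded below by a quadratic [-A |x - xbar|^2 - B].  Outside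
    the ball of radius [delta] around [xbar] the constants [B] and [f xbar] are
    absorbed into the quadratic term, since [1 <= |x - xbar|^2 / delta^2] there;
    inside it the local hypothesis applies.  A single support function
    suffices. *)
From Stdlib Require Import Reals Lra Psatz.
Open Scope R_scope.

Section InnerProduct.

Variable X : HilbertSpace.

Lemma hinner0l (w : X) : hinner hzero w = 0.
Proof. pose proof (hinner_add X hzero hzero w) as H. rewrite hadd_zero in H. lra. Qed.

Lemma hinnerNl (z w : X) : hinner (hopp z) w = - hinner z w.
Proof.
  pose proof (hinner_add X z (hopp z) w) as H.
  rewrite hadd_opp, hinner0l in H. lra.
Qed.

Lemma hinnerDr (x y z : X) : hinner z (hadd x y) = hinner z x + hinner z y.
Proof. rewrite !(hinner_sym X z). apply hinner_add. Qed.

Lemma hinnerNr (z w : X) : hinner w (hopp z) = - hinner w z.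
Proof. rewrite !(hinner_sym X w). apply hinnerNl. Qed.

Lemma hsubK (x y : X) : hadd (hsub x y) y = x.
Proof.
  unfold hsub. rewrite <- hadd_assoc, (hadd_comm X (hopp y) y), hadd_opp.
  apply hadd_zero.
Qed.

Lemma hnorm_sq (x : X) : hnorm x ^ 2 = hinner x x.
Proof. apply pow2_sqrt, hinner_pos. Qed.

Lemma hnorm_ge0 (x : X) : 0 <= hnorm x.
Proof. apply sqrt_pos. Qed.

Lemma hnorm_sqD_le (y z : X) : hnorm (hadd y z) ^ 2 <= 2 * hnorm y ^ 2 + 2 * hnorm z ^ 2.
Proof.
  rewrite !hnorm_sq.
  pose proof (hinner_pos X (hadd y (hopp z))) as H.
  rewrite !hinner_add, !hinnerDr, !hinnerNl, !hinnerNr, (hinner_sym X z y) in *.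
  lra.
Qed.

End InnerProduct.

Lemma Phi_lsc_quadratic_minorant (X : HilbertSpace) (phi : X -> R) :
  in_Phi_lsc phi ->
  exists A B, 0 <= A /\ 0 <= B /\ forall x, - A * hnorm x ^ 2 - B <= phi x.
Proof.
  intros (a & v & c & Ha & (_ & _ & C & HC) & Hphi).
  exists (a + Rabs C), (Rabs C + Rabs c).
  split; [pose proof (Rabs_pos C); lra|].
  split; [pose proof (Rabs_pos C); pose proof (Rabs_pos c); lra|].
  intros x. rewrite Hphi.
  (* [|x| <= 1 + |x|^2] turns the linear bound on [v] into a quadratic one. *)
  assert (Hv : - Rabs C * (1 + hnorm x ^ 2) <= v x).
  { pose proof (hnorm_ge0 X x) as Hx.
    pose proof (HC x). pose proof (Rle_abs (- v x)). rewrite Rabs_Ropp in *.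
    assert (C * hnorm x <= Rabs C * hnorm x) by (apply Rmult_le_compat_r; [lra | apply RRle_abs]).
    assert (hnorm x <= 1 + hnorm x ^ 2) by nra.
    assert (Rabs C * hnorm x <= Rabs C * (1 + hnorm x ^ 2))
      by (apply Rmult_le_compat_l; [apply Rabs_pos | lra]).
    lra. }
  pose proof (Rle_abs (- c)). rewrite Rabs_Ropp in *. lra.
Qed.

Lemma quadratic_minorant_recenter (X : HilbertSpace) (g : X -> R) (x0 : X) (A B : R) :
  0 <= A -> 0 <= B -> (forall x, - A * hnorm x ^ 2 - B <= g x) ->
  exists A' B', 0 <= A' /\ 0 <= B' /\
    forall x, - A' * hnorm (hsub x x0) ^ 2 - B' <= g x.
Proof.
  intros HA HB Hg.
  exists (2 * A), (B + 2 * A * hnorm x0 ^ 2).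
  pose proof (pow2_ge_0 (hnorm x0)).
  split; [lra|]. split; [nra|].
  intros x. eapply Rle_trans; [|apply Hg].
  pose proof (hnorm_sqD_le X (hsub x x0) x0) as Hsq. rewrite hsubK in Hsq. nra.
Qed.

Lemma const_le_quadratic_outside_ball (K delta t : R) :
  0 <= K -> 0 < delta -> delta <= t -> K <= K / delta ^ 2 * t ^ 2.
Proof.
  intros HK Hd Ht.
  replace K with (K / delta ^ 2 * delta ^ 2) at 1 by (field; lra).
  apply Rmult_le_compat_l.
  - apply Rle_mult_inv_pos; [lra | apply pow_lt; lra].
  - apply pow_incr; lra.
Qed.

Theorem mainTheorem2 (X : HilbertSpace) (f : X -> ERbar) (xbar : X) (fxbar : R)
  (Hproper : proper f) (Hconv : phi_lsc_convex f)
  (Hdom : f xbar = Fin fxbar) :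
  (exists rho delta : R, 0 <= rho /\ 0 < delta /\
     forall x : X, hnorm (hsub x xbar) < delta ->
       ER_le (Fin (fxbar - rho * (hnorm (hsub x xbar))^2)) (f x)) ->
  exists rhobar : R, 0 <= rhobar /\
     forall x : X, ER_le (Fin (fxbar - rhobar * (hnorm (hsub x xbar))^2)) (f x).
Proof.
  intros (rho & delta & Hrho & Hdelta & Hnear).
  destruct Hproper as [[phi [Hphi Hsupp]] _].
  destruct (Phi_lsc_quadratic_minorant X phi Hphi) as (A0 & B0 & HA0 & HB0 & Hmin0).
  destruct (quadratic_minorant_recenter X phi xbar A0 B0 HA0 HB0 Hmin0)
    as (A & B & HA & HB & Hmin).
  set (K := B + Rabs fxbar).
  assert (HK : 0 <= K) by (pose proof (Rabs_pos fxbar); unfold K; lra).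
  assert (HKd : 0 <= K / delta ^ 2) by (apply Rle_mult_inv_pos; [lra | apply pow_lt; lra]).
  exists (rho + A + K / delta ^ 2).
  split; [lra|].
  intros x.
  specialize (Hnear x). specialize (Hsupp x). specialize (Hmin x).
  set (t := hnorm (hsub x xbar)) in *.
  assert (Hrhot : 0 <= rho * t ^ 2) by (apply Rmult_le_pos; [lra | apply pow2_ge_0]).
  assert (HAt : 0 <= A * t ^ 2) by (apply Rmult_le_pos; [lra | apply pow2_ge_0]).
  assert (HKt : 0 <= K / delta ^ 2 * t ^ 2) by (apply Rmult_le_pos; [lra | apply pow2_ge_0]).
  destruct (Rlt_or_le t delta) as [Hin | Hout].
  - specialize (Hnear Hin).
    destruct (f x); simpl in *; [lra | exact I].
  - pose proof (const_le_quadratic_outside_ball K delta t HK Hdelta Hout).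
    assert (B + fxbar <= K) by (pose proof (Rle_abs fxbar); unfold K; lra).
    destruct (f x); simpl in *; [lra | exact I].
Qed.
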